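(* Let $U_1,U_2,\dots$ be i.i.d. almost surely positive random variables distributed as $U$ with tail function $Q(x)=\mathbb{P}(U>x)$, and assume $\mathbb{E}[U^2]<\infty$ and that there exist $\beta\in(0,1/2)$ and $x_0>0$ in the interior of the support of $U$ such that $Q^{1/2-\beta}$ is convex on $[x_0,\infty)$. Let $V_1\le\dots\le V_N$ be the order statistics of $(U_1,\dots,U_N)$ and let $Q^{-1}(y)=\inf\{x>0:\ Q(x)\le y\}$ for $y\in(0,1)$. For any function $h$ on $\mathbb{R}_+$ with $\lim_{x\to+\infty}h(x)=+\infty$, set \[a^h_N=\begin{cases}Q^{-1}\big(\tfrac{h(N)}{N}\big)&\text{if }\tfrac{h(N)}N<1,\\ 0&\text{otherwise,}\end{cases}\qquad b^h_N=Q^{-1}\Big(\frac1{Nh(N)}\Big),\qquad A^h_N=\{a^h_N\le V_{N-1}\le V_N\le b^h_N\}.\] Then $\lim_{N\to\infty}\mathbb{P}(A^h_N)=1$. *)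

From HB Require Import structures.
From mathcomp Require Import all_boot all_order all_algebra.
From mathcomp Require Import all_classical all_reals all_analysis.
Set Implicit Arguments. Unset Strict Implicit. Unset Printing Implicit Defensive.
Import Order.TTheory GRing.Theory Num.Theory.
Import numFieldNormedType.Exports.
Local Open Scope classical_set_scope.
Local Open Scope ring_scope.

Definition mutually_independent d (T : measurableType d) (R : realType)
  (P : probability T R) (X : nat -> {RV P >-> R}) :=
  forall (s : seq nat), uniq s ->
  forall A : nat -> set R, (forall i, measurable (A i)) ->
  P (\bigcap_(i in [set` s]) (X i @^-1` A i)) =
  (\prod_(i <- s) P (X i @^-1` A i))%E.

Definition identically_distributed d (T : measurableType d) (R : realType)
  (P : probability T R) (X : nat -> {RV P >-> R}) :=
  forall i (A : set R), measurable A -> P (X i @^-1` A) = P (X 0 @^-1` A).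

Definition tail d (T : measurableType d) (R : realType)
  (P : probability T R) (U : T -> R) (x : R) : R :=
  fine (P [set w | x < U w]).

Definition tail_inv (R : realType) (Q : R -> R) (y : R) : R :=
  inf [set x : R | 0 < x /\ Q x <= y].

(* support of the law of U: points all of whose neighbourhoods have
   positive probability (smallest closed set of full measure) *)
Definition support_law d (T : measurableType d) (R : realType)
  (P : probability T R) (U : T -> R) : set R :=
  [set x | forall e : R, 0 < e -> (0 < P (U @^-1` ball x e))%E].

Definition convex_on (R : realType) (D : set R) (f : R -> R) :=
  forall x y t, D x -> D y -> 0 <= t <= 1 ->
    f (t * x + (1 - t) * y) <= t * f x + (1 - t) * f y.

(* order statistics of (X 0, ..., X (N-1)) at w, 1-indexed:
   ord_stat X N k w = V_k, the k-th smallest (V_1 <= ... <= V_N) *)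
Definition ord_stat d (T : measurableType d) (R : realType)
  (P : probability T R) (X : nat -> {RV P >-> R}) (N k : nat) (w : T) : R :=
  nth 0 (sort <=%R [seq X i w | i <- iota 0 N]) k.-1.

Definition a_seq (R : realType) (Q : R -> R) (h : R -> R) (N : nat) : R :=
  if h N%:R / N%:R < 1 then tail_inv Q (h N%:R / N%:R) else 0.

Definition b_seq (R : realType) (Q : R -> R) (h : R -> R) (N : nat) : R :=
  tail_inv Q (1 / (N%:R * h N%:R)).

Definition event_A d (T : measurableType d) (R : realType)
  (P : probability T R) (X : nat -> {RV P >-> R}) (h : R -> R) (N : nat) :
  set T :=
  let Q := tail P (X 0) in
  [set w | a_seq Q h N <= ord_stat X N N.-1 w /\
           ord_stat X N N.-1 w <= ord_stat X N N w /\
           ord_stat X N N w <= b_seq Q h N].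

From HB Require Import structures.
From mathcomp Require Import all_boot all_order all_algebra.
From mathcomp Require Import all_classical all_reals all_analysis.
From mathcomp Require Import ring lra zify.
Import Order.TTheory GRing.Theory Num.Theory.
Import numFieldNormedType.Exports.
Local Open Scope classical_set_scope.
Local Open Scope ring_scope.

(* With a := a^h_N and b := b^h_N, the event A^h_N says that no sample exceeds
   b and that at least two samples are >= a.  Right continuity of Q gives
   Q b <= 1 / (N h(N)), so by independence and Bernoulli's inequality the first
   condition fails with probability at most N Q b <= 1 / h(N).  With
   p := P(U >= a), left limits of Q give N p >= min(h(N), N), and the failure of
   the second condition is the binomial event {Bin(N, p) <= 1}, of probability
   at most 6 / (N p) once N >= 4.  Hence P(A^h_N) >= 1 - 7 / h(N) - 6 / N. *)

Lemma sorted_nth_count {disp} {T : orderType disp} (x0 : T) (s : seq T)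
    (p : pred T) k :
  sorted <=%O s -> (forall x y, (x <= y)%O -> p x -> p y) -> (k < size s)%N ->
  p (nth x0 s k) = (size s - k <= count p s)%N.
Proof.
move=> s_sorted p_up ks.
have nth_mono := sorted_leq_nth le_trans lexx x0 s_sorted.
apply/idP/idP => [pk|].
  have : all p (drop k s).
    apply/(all_nthP x0) => j; rewrite size_drop => js.
    rewrite nth_drop; apply: (p_up _ _ _ pk); apply: nth_mono;
      rewrite ?inE /= ?leq_addr -?ltn_subRL //.
  rewrite all_count size_drop => /eqP <-.
  by rewrite -{2}(cat_take_drop k s) count_cat leq_addl.
apply: contraLR => npk.
have count_take : count p (take k.+1 s) = 0%N.
  apply/eqP; rewrite -leqn0 leqNgt -has_count; apply/hasPn => x /(nthP x0) [j].
  rewrite size_take_min => jk <-; rewrite nth_take; last by lia.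
  by apply: contra npk; apply: p_up; apply: nth_mono; rewrite ?inE /=; lia.
have -> : count p s = count p (drop k.+1 s).
  by rewrite -{1}(cat_take_drop k.+1 s) count_cat count_take.
by rewrite -ltnNge -(subnSK ks) ltnS -size_drop count_size.
Qed.

Section order_statistics.
Context {d} {T : measurableType d} {R : realType} {P : probability T R}
  (X : nat -> {RV P >-> R}).

Let sorted_sample N w := sort <=%R [seq X i w | i <- iota 0 N].

Let sorted_sample_sorted N w : sorted <=%R (sorted_sample N w).
Proof. exact: (sort_sorted le_total). Qed.

Let size_sorted_sample N w : size (sorted_sample N w) = N.
Proof. by rewrite size_sort size_map size_iota. Qed.

Let count_sorted_sample N w (p : pred R) :
  count p (sorted_sample N w) = count (fun i => p (X i w)) (iota 0 N).
Proof. by rewrite (permP (permEl (perm_sort _ _))) count_map. Qed.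

Lemma ge_ord_stat_penultimateE N w a : (2 <= N)%N ->
  (a <= ord_stat X N N.-1 w) = (2 <= count (fun i => (a <= X i w)%R) (iota 0 N))%N.
Proof.
move=> N2; rewrite /ord_stat -/(sorted_sample N w).
rewrite (sorted_nth_count 0 _ (fun x => a <= x)) ?sorted_sample_sorted //.
- by rewrite size_sorted_sample count_sorted_sample; congr (_ <= _)%N; lia.
- by move=> x y xy ax; apply: le_trans xy.
- by rewrite size_sorted_sample; lia.
Qed.

Lemma le_ord_stat_maxE N w b : (0 < N)%N ->
  (ord_stat X N N w <= b) = ~~ has (fun i => b < X i w) (iota 0 N).
Proof.
move=> N0; rewrite /ord_stat -/(sorted_sample N w) leNgt.
rewrite (sorted_nth_count 0 _ (fun x => b < x)) ?sorted_sample_sorted //.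
- by rewrite size_sorted_sample count_sorted_sample has_count; congr (~~ _); lia.
- by move=> x y xy bx; apply: lt_le_trans xy.
- by rewrite size_sorted_sample; lia.
Qed.

Lemma ord_stat_penultimate_le_max N w : (0 < N)%N ->
  ord_stat X N N.-1 w <= ord_stat X N N w.
Proof.
move=> N0; apply: (sorted_leq_nth le_trans lexx 0 (sorted_sample_sorted N w));
  rewrite ?inE ?size_sorted_sample /=; lia.
Qed.

End order_statistics.

Section tail_function.
Context {d} {T : measurableType d} {R : realType} {P : probability T R}
  (Y : {RV P >-> R}).

Local Notation Q := (tail P Y).

Definition tail_ge (x : R) : R := fine (P (Y @^-1` `[x, +oo[)).

Lemma tailE x : (Q x)%:E = P (Y @^-1` `]x, +oo[).
Proof.
rewrite /tail; have -> : [set w | x < Y w] = Y @^-1` `]x, +oo[.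
  by apply/seteqP; split => w /=; rewrite in_itv /= andbT.
by rewrite fineK // fin_num_measure //; exact: measurable_funPTI.
Qed.

Lemma tail_ccdf x : (Q x)%:E = ccdf Y x.
Proof. by rewrite tailE. Qed.

Lemma tail_geE x : (tail_ge x)%:E = P (Y @^-1` `[x, +oo[).
Proof. by rewrite fineK // fin_num_measure //; exact: measurable_funPTI. Qed.

Lemma tail_ge0 x : 0 <= Q x.
Proof. by rewrite -lee_fin tailE. Qed.

Lemma tail_le1 x : Q x <= 1.
Proof. by rewrite -lee_fin tailE probability_le1 //; exact: measurable_funPTI. Qed.

Lemma tail_ge_le1 x : tail_ge x <= 1.
Proof. by rewrite -lee_fin tail_geE probability_le1 //; exact: measurable_funPTI. Qed.

Lemma tail_nonincreasing : nonincreasing_fun Q.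
Proof. by move=> x y xy; rewrite -lee_fin !tail_ccdf; exact: ccdf_nonincreasing. Qed.

Lemma tail_le_tail_ge x : Q x <= tail_ge x.
Proof.
rewrite -lee_fin tailE tail_geE; apply: le_measure; rewrite ?inE;
  try exact: measurable_funPTI.
by apply: preimage_subset; apply: subset_itvr; rewrite bnd_simp.
Qed.

Lemma prob_le_tail x : fine (P (Y @^-1` `]-oo, x])) = 1 - Q x.
Proof.
rewrite -setCitvr -preimage_setC probability_setC -?tailE //.
exact: measurable_funPTI.
Qed.

Lemma prob_lt_tail_ge x : fine (P (Y @^-1` `]-oo, x[)) = 1 - tail_ge x.
Proof.
rewrite -setCitvr -preimage_setC probability_setC -?tail_geE //.
exact: measurable_funPTI.
Qed.

Lemma cvg_tail_pinfty : Q x @[x --> +oo] --> 0.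
Proof.
have := cvg_ccdfy0 Y => /fine_cvg; apply: cvg_trans.
by apply: near_eq_cvg; near=> x; rewrite /= -tail_ccdf.
Unshelve. all: by end_near.
Qed.

Lemma cvg_tail_left x :
  (Q (x - n.+1%:R^-1))%:E @[n --> \oo] --> P (Y @^-1` `[x, +oo[).
Proof.
under eq_fun do rewrite tailE.
rewrite itvcyEbigcap preimage_bigcap.
apply: nonincreasing_cvg_mu => [| | |m n mn].
- by rewrite -ge0_fin_numE // fin_num_measure //; exact: measurable_funPTI.
- by move=> ?; exact: measurable_funPTI.
- by apply: bigcap_measurable => // ? _; exact: measurable_funPTI.
- apply/subsetPset; apply: preimage_subset; apply: subset_itvr.
  by rewrite bnd_simp lerD2l lerN2 lef_pV2 ?posrE // ler_nat.
Qed.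

Lemma tail_tail_inv_le y : 0 < y -> Q (tail_inv Q y) <= y.
Proof.
move=> y0; set b := tail_inv Q y.
have [M [_ QM]] := @cvgr_lt _ _ _ _ _ _ cvg_tail_pinfty y y0.
have ne : [set x | 0 < x /\ Q x <= y] !=set0.
  exists (Num.max M 0 + 1); split; first by rewrite ltr_pwDr // le_max lexx orbT.
  by apply/ltW/QM; rewrite ltr_pwDr // le_max lexx.
have above_b x : b < x -> Q x <= y.
  move=> bx; have [z [_ Qz] zx] := inf_lt ne bx.
  exact: le_trans (tail_nonincreasing _ _ (ltW zx)) Qz.
rewrite -lee_fin tail_ccdf; apply: (cvge_to_le (@ccdf_right_continuous _ _ _ _ Y b)).
by near=> x; rewrite -tail_ccdf lee_fin above_b //; near: x; exact: nbhs_right_gt.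
Unshelve. all: by end_near.
Qed.

Lemma tail_inv_le_tail_ge y : Q 0 = 1 -> 0 < y < 1 -> y <= tail_ge (tail_inv Q y).
Proof.
move=> Q0 /andP[y0 y1]; set a := tail_inv Q y.
have below_a x : x < a -> y < Q x.
  move=> xa; have [x0|x0] := leP x 0.
    by apply: (lt_le_trans y1); rewrite -Q0; exact: tail_nonincreasing.
  rewrite ltNge; apply: contraTN xa => Qx; rewrite -leNgt.
  by apply: ge_inf; [exists 0 => z [/ltW] | ].
rewrite -lee_fin tail_geE; apply: (cvge_to_ge (cvg_tail_left a)).
near=> n; rewrite lee_fin ltW // below_a //.
by rewrite ltrBlDr ltrDl invr_gt0.
Unshelve. all: by end_near.
Qed.

End tail_function.

Lemma two_le_count {T : eqType} {s : seq T} {p : pred T} {i j : T} : uniq s ->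
  i \in s -> j \in s -> i != j -> p i -> p j -> (2 <= count p s)%N.
Proof.
move=> s_uniq si sj ij pi pj; rewrite -size_filter.
apply: (@uniq_leq_size _ [:: i; j]) => /=; first by rewrite inE ij.
by move=> x; rewrite !inE => /orP[]/eqP->; rewrite mem_filter ?pi ?pj.
Qed.

Section iid_sample.
Context {d} {T : measurableType d} {R : realType} {P : probability T R}
  (X : nat -> {RV P >-> R}) (N : nat).
Hypothesis indep : mutually_independent X.
Hypothesis ident : identically_distributed X.

Local Notation sample_cap A := (\bigcap_(j in [set` iota 0 N]) X j @^-1` A j).

Lemma measurable_sample_cap (A : nat -> set R) : (forall j, measurable (A j)) ->
  measurable (sample_cap A).
Proof.
move=> mA; apply: fin_bigcap_measurable; first exact: finite_seq.
by move=> j _; exact: measurable_funPTI.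
Qed.

Lemma prob_sample_cap (A : nat -> set R) : (forall j, measurable (A j)) ->
  P (sample_cap A) = (\prod_(j <- iota 0 N) fine (P (X 0 @^-1` A j)))%:E.
Proof.
move=> mA; rewrite indep ?iota_uniq // -prodEFin; apply: eq_bigr => j _.
by rewrite ident // fineK // fin_num_measure //; exact: measurable_funPTI.
Qed.

Definition all_le (b : R) := sample_cap (fun=> `]-oo, b]%classic).
Definition all_lt (a : R) := sample_cap (fun=> `]-oo, a[%classic).
Definition only_ge (a : R) i :=
  sample_cap (fun j => if j == i then `[a, +oo[%classic else `]-oo, a[%classic).
Definition at_most_one_ge (a : R) :=
  [set w | (count (fun j => (a <= X j w)%R) (iota 0 N) <= 1)%N].

Lemma at_most_one_geE a :
  at_most_one_ge a = all_lt a `|` \bigcup_(i in [set` iota 0 N]) only_ge a i.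
Proof.
rewrite /at_most_one_ge /all_lt /only_ge; apply/seteqP; split => w /=.
- move=> le1.
  have [|] := boolP (has (fun j => (a <= X j w)%R) (iota 0 N)); last first.
    by move/hasPn => none; left => j /= /none; rewrite /= in_itv /= ltNge.
  move=> /hasP [i iS ai]; right; exists i => // j /= jS.
  case: eqP => [->|/eqP ji]; first by rewrite /mkset in_itv /= ai.
  rewrite /mkset in_itv /= ltNge; apply: contraL le1 => aj; rewrite -ltnNge.
  by apply: (two_le_count (iota_uniq 0 N) iS jS _ ai aj); rewrite eq_sym.
- case => [lt_all|[i iS only_i]].
    rewrite /= (eq_in_count (a2 := pred0)) ?count_pred0 // => j /lt_all.
    by rewrite /= in_itv /= leNgt => ->.
  rewrite /= (eq_in_count (a2 := pred1 i)).
    by rewrite count_uniq_mem ?iota_uniq // iS.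
  move=> j /only_i; rewrite /=.
  by case: eqP => _; rewrite /mkset in_itv /= ?andbT // leNgt => ->.
Qed.

Lemma measurable_at_most_one_ge a : measurable (at_most_one_ge a).
Proof.
rewrite at_most_one_geE; apply: measurableU; first exact: measurable_sample_cap.
apply: fin_bigcup_measurable; first exact: finite_seq.
by move=> i _; apply: measurable_sample_cap => j; case: ifP.
Qed.

Lemma measurable_all_le b : measurable (all_le b).
Proof. exact: measurable_sample_cap. Qed.

Lemma prob_all_le b : P (all_le b) = ((1 - tail P (X 0) b) ^+ N)%:E.
Proof.
rewrite prob_sample_cap // (eq_bigr _ (fun j _ => prob_le_tail (X 0) b)).
by rewrite big_const_seq iter_mulr_1 count_predT size_iota.
Qed.

Local Notation p a := (tail_ge (X 0) a).

Lemma prob_all_lt a : P (all_lt a) = ((1 - p a) ^+ N)%:E.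
Proof.
rewrite prob_sample_cap // (eq_bigr _ (fun j _ => prob_lt_tail_ge (X 0) a)).
by rewrite big_const_seq iter_mulr_1 count_predT size_iota.
Qed.

Lemma prob_only_ge a i : i \in iota 0 N ->
  P (only_ge a i) = (p a * (1 - p a) ^+ N.-1)%:E.
Proof.
move=> iS; rewrite prob_sample_cap; last by move=> j; case: ifP.
rewrite (bigD1_seq i) ?iota_uniq //= eqxx.
rewrite (eq_bigr (fun=> 1 - p a)); last first.
  by move=> j /negbTE ->; exact: prob_lt_tail_ge.
have count_others : count (predC (pred1 i)) (iota 0 N) = N.-1.
  have := count_predC (pred1 i) (iota 0 N).
  by rewrite count_uniq_mem ?iota_uniq // iS size_iota add1n => /(congr1 predn).
by rewrite big_const_seq iter_mulr_1 count_others.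
Qed.

Lemma prob_at_most_one_ge_le a : (P (at_most_one_ge a) <=
  ((1 - p a) ^+ N + (p a * (1 - p a) ^+ N.-1) *+ N)%:E)%E.
Proof.
rewrite at_most_one_geE bigcup_seq EFinD -prob_all_lt.
apply: le_trans (measureU2 _ _ _) _.
- exact: measurable_sample_cap.
- apply: bigsetU_measurable => i _.
  by apply: measurable_sample_cap => j; case: ifP.
apply: leeD => //.
have -> : iota 0 N = index_iota 0 N by rewrite /index_iota subn0.
rewrite big_mkord; apply: le_trans (Boole_inequality P _) _.
  by move=> i _; apply: measurable_sample_cap => j; case: ifP.
rewrite (eq_bigr (fun=> (p a * (1 - p a) ^+ N.-1)%:E)); last first.
  by move=> i _; apply: prob_only_ge; rewrite mem_iota ltn_ord.
by rewrite sumEFin sumr_const card_ord.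
Qed.

End iid_sample.

Section binomial_bounds.
Context {R : realFieldType}.
Implicit Types (p x : R) (k : nat).

Lemma bernoulli_ineq x k : 0 <= x <= 1 -> 1 - k%:R * x <= (1 - x) ^+ k.
Proof.
move=> /andP[x0 x1]; elim: k => [|k IH]; first by rewrite mul0r subr0 expr0.
have x1' : 0 <= 1 - x by lra.
have kx2 : 0 <= k%:R * (x * x) :> R by rewrite mulr_ge0 ?mulr_ge0.
rewrite exprS -natr1; apply: le_trans _ (ler_wpM2l x1' IH); nra.
Qed.

Lemma truncated_binomial_le p k : 0 <= p ->
  1 + k%:R * p + k%:R * (k%:R - 1) / 2 * p ^+ 2 <= (1 + p) ^+ k.
Proof.
move=> p0; elim: k => [|k IH]; first by rewrite !mul0r !addr0 expr0.
have kk1 : 0 <= k%:R * (k%:R - 1) :> R.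
  by case: k {IH} => [|k]; rewrite ?mul0r // mulr_ge0 // -natr1 addrK.
have p1 : 0 <= 1 + p by lra.
have p3 : 0 <= k%:R * (k%:R - 1) / 2 * (p * p * p) :> R.
  by apply: mulr_ge0; [exact: divr_ge0 | rewrite !mulr_ge0].
rewrite [(1 + p) ^+ _]exprS; apply: le_trans _ (ler_wpM2l p1 IH).
rewrite -natr1 expr2; nra.
Qed.

Lemma exprB_truncated_binomial_le1 p k : 0 <= p <= 1 ->
  (1 - p) ^+ k * (1 + k%:R * p + k%:R * (k%:R - 1) / 2 * p ^+ 2) <= 1.
Proof.
move=> /andP[p0 p1].
have q0 : 0 <= (1 - p) ^+ k by rewrite exprn_ge0 // subr_ge0.
apply: le_trans (ler_wpM2l q0 (truncated_binomial_le p k p0)) _.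
by rewrite -exprMn exprn_ile1 //; nra.
Qed.

Lemma binomial_le1_success_bound p N : (4 <= N)%N -> 0 < p <= 1 ->
  ((1 - p) ^+ N + (p * (1 - p) ^+ N.-1) *+ N) * (N%:R * p) <= 6.
Proof.
move=> N4 /andP[p0 p1].
have -> : N = N.-1.+1 by lia.
set k := N.-1; have k3 : 3 <= k%:R :> R by rewrite (ler_nat R 3) /k; lia.
have p01 : 0 <= p <= 1 by rewrite ltW.
have := exprB_truncated_binomial_le1 p k p01.
set B := 1 + _ + _; set q := (1 - p) ^+ k => qB.
have q0 : 0 <= q by rewrite exprn_ge0 // subr_ge0.
have le6B : (k%:R + 1) * p * (1 + k%:R * p) <= 6 * B by rewrite /B expr2; nra.
rewrite exprS -mulr_natr -natr1 -/q.
have -> : ((1 - p) * q + p * q * (k%:R + 1)) * ((k%:R + 1) * p) =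
  q * ((k%:R + 1) * p * (1 + k%:R * p)) by ring.
by apply: le_trans (ler_wpM2l q0 le6B) _; nra.
Qed.

End binomial_bounds.

Lemma invr_min_le_add {R : realFieldType} (x y : R) : 0 < x -> 0 < y ->
  (Order.min x y)^-1 <= x^-1 + y^-1.
Proof.
move=> x0 y0; have [_|_] := leP x y.
- by rewrite lerDl invr_ge0 ltW.
- by rewrite lerDr invr_ge0 ltW.
Qed.

Lemma prob_setCI_ge {d} {T : measurableType d} {R : realType}
    (P : probability T R) (A B : set T) : measurable A -> measurable B ->
  fine (P B) - fine (P A) <= fine (P (~` A `&` B)).
Proof.
move=> mA mB.
have mAB : measurable (~` A `&` B) by exact: measurableI (measurableC mA) mB.
have : (P B <= P (~` A `&` B) + P A)%E.
  apply: le_trans (measureU2 _ mAB mA); apply: le_measure; rewrite ?inE //.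
    exact: measurableU.
  by move=> w Bw; have [Aw|nAw] := pselect (A w); [right | left].
rewrite -(fineK (fin_num_measure _ _ mB)) -(fineK (fin_num_measure _ _ mA)).
rewrite -(fineK (fin_num_measure _ _ mAB)) -EFinD lee_fin; lra.
Qed.

Section event_A_probability.
Context {d} {T : measurableType d} {R : realType} {P : probability T R}
  (X : nat -> {RV P >-> R}) (h : R -> R).
Hypothesis indep : mutually_independent X.
Hypothesis ident : identically_distributed X.
Hypothesis tail0 : tail P (X 0) 0 = 1.

Local Notation Q := (tail P (X 0)).
Local Notation a N := (a_seq Q h N).
Local Notation b N := (b_seq Q h N).

Lemma event_AE N : (2 <= N)%N ->
  event_A X h N = ~` at_most_one_ge X N (a N) `&` all_le X N (b N).
Proof.
move=> N2; rewrite /event_A /at_most_one_ge; apply/seteqP; split => w /=.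
- rewrite ge_ord_stat_penultimateE // le_ord_stat_maxE //; last by lia.
  move=> [a_le [_ /hasPn le_b]]; split; first by apply/negP; rewrite -ltnNge.
  by move=> j /le_b; rewrite /= in_itv /= leNgt.
- move=> [/negP lt_a le_b]; split; [|split].
  + by rewrite ge_ord_stat_penultimateE // ltnNge.
  + by apply: ord_stat_penultimate_le_max; lia.
  + rewrite le_ord_stat_maxE; last by lia.
    by apply/hasPn => j /le_b; rewrite /= in_itv /= leNgt.
Qed.

Lemma measurable_event_A N : (2 <= N)%N -> measurable (event_A X h N).
Proof.
move=> N2; rewrite event_AE //; apply: measurableI.
  exact/measurableC/measurable_at_most_one_ge.
exact: measurable_all_le.
Qed.

Lemma prob_all_le_b_seq N : (0 < N)%N -> 1 <= h N%:R ->
  1 - (h N%:R)^-1 <= fine (P (all_le X N (b N))).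
Proof.
move=> N0 h1; rewrite prob_all_le //=.
have N0' : 0 < N%:R :> R by rewrite ltr0n.
have h0 : 0 < h N%:R := lt_le_trans ltr01 h1.
have Qb_le : Q (b N) <= (N%:R * h N%:R)^-1.
  by rewrite -div1r; apply: tail_tail_inv_le; rewrite div1r invr_gt0 mulr_gt0.
have NQb_le : N%:R * Q (b N) <= (h N%:R)^-1.
  apply: le_trans (ler_wpM2l (ltW N0') Qb_le) _.
  by rewrite invfM mulrA mulfV ?mul1r // gt_eqF.
have Qb01 : 0 <= Q (b N) <= 1 by rewrite tail_ge0 tail_le1.
have := bernoulli_ineq _ N Qb01; lra.
Qed.

Lemma min_le_mul_tail_ge_a_seq N : (0 < N)%N -> 0 < h N%:R ->
  Order.min (h N%:R) N%:R <= N%:R * tail_ge (X 0) (a N).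
Proof.
move=> N0 h0; have N0' : 0 < N%:R :> R by rewrite ltr0n.
rewrite /a_seq; case: ifPn => [hN1|_].
- have := tail_inv_le_tail_ge (X 0) (h N%:R / N%:R) tail0.
  rewrite divr_gt0 // hN1 => /(_ isT); rewrite ler_pdivrMr // mulrC => le_Np.
  by rewrite ge_min le_Np.
- have -> : tail_ge (X 0) 0 = 1.
    by apply/le_anti; rewrite tail_ge_le1 -tail0 tail_le_tail_ge.
  by rewrite mulr1 ge_min lexx orbT.
Qed.

Lemma prob_at_most_one_ge_a_seq N : (4 <= N)%N -> 1 <= h N%:R ->
  fine (P (at_most_one_ge X N (a N))) <= 6 * ((h N%:R)^-1 + (N%:R)^-1).
Proof.
move=> N4 h1; set p := tail_ge (X 0) (a N).
have N0 : 0 < N%:R :> R by rewrite ltr0n; lia.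
have h0 : 0 < h N%:R := lt_le_trans ltr01 h1.
have min0 : 0 < Order.min (h N%:R) N%:R by rewrite lt_min N0 h0.
have Np_ge := min_le_mul_tail_ge_a_seq N (ltac:(lia)) h0.
have Np0 : 0 < N%:R * p := lt_le_trans min0 Np_ge.
have p0 : 0 < p by rewrite -(pmulr_rgt0 _ N0).
have p01 : 0 < p <= 1 by rewrite p0 tail_ge_le1.
have := binomial_le1_success_bound p N N4 p01.
rewrite -ler_pdivlMr // => binom_le.
have prob_le := prob_at_most_one_ge_le X N indep ident (a N).
have mW := measurable_at_most_one_ge X N (a N).
rewrite -(fineK (fin_num_measure _ _ mW)) lee_fin in prob_le.
apply: (le_trans prob_le); apply: (le_trans binom_le).
rewrite ler_pM2l // (le_trans _ (invr_min_le_add _ _ h0 N0)) //.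
by rewrite lef_pV2 ?posrE.
Qed.

Lemma prob_event_A_ge N : (4 <= N)%N -> 1 <= h N%:R ->
  1 - (7 * (h N%:R)^-1 + 6 * (N%:R)^-1) <= fine (P (event_A X h N)).
Proof.
move=> N4 h1; rewrite event_AE; last by lia.
have := prob_setCI_ge P _ _ (measurable_at_most_one_ge X N (a N))
  (measurable_all_le X N (b N)).
have := prob_all_le_b_seq N (ltac:(lia)) h1.
have := prob_at_most_one_ge_a_seq N N4 h1.
lra.
Qed.

End event_A_probability.

Lemma cvg_inv_pinfty {R : realType} (u : nat -> R) :
  u n @[n --> \oo] --> +oo -> (u n)^-1 @[n --> \oo] --> 0.
Proof.
move=> u_oo; apply/gtr0_cvgV0 => //.
by near=> n; apply: lt_le_trans ltr01 _; near: n; exact: (cvgryPge _).1 u_oo 1.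
Unshelve. all: by end_near.
Qed.

Lemma cvg_one_sub_invs {R : realType} (u : nat -> R) (c1 c2 : R) :
  u n @[n --> \oo] --> +oo ->
  (1 - (c1 * (u n)^-1 + c2 * (n%:R)^-1)) @[n --> \oo] --> (1 : R).
Proof.
move=> u_oo; rewrite -[X in _ --> X]subr0 -[X in _ - X]addr0.
rewrite -[X in _ - (X + _)](mulr0 c1) -[X in _ - (_ + X)](mulr0 c2).
apply: cvgB; first exact: cvg_cst.
apply: cvgD; apply: cvgM; try exact: cvg_cst.
- exact: cvg_inv_pinfty.
- exact/cvg_inv_pinfty/cvgr_idn.
Qed.

Theorem lemma2 (d : measure_display) (T : measurableType d) (R : realType)
  (P : probability T R) (X : nat -> {RV P >-> R})
  (beta x0 : R) (h : R -> R) :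
  mutually_independent X ->
  identically_distributed X ->
  P [set w | 0 < X 0 w] = 1%E ->
  ('E_P[fun w => (X 0%N w ^+ 2)%R] < +oo)%E ->
  0 < beta < 1 / 2 ->
  0 < x0 ->
  interior (support_law P (X 0)) x0 ->
  convex_on [set x | x0 <= x] (fun x => powR (tail P (X 0) x) (1 / 2 - beta)) ->
  h x @[x --> +oo] --> +oo ->
  (fun N => P (event_A X h N)) @ \oo --> 1%E.
Proof.
move=> indep ident X0_pos _ _ _ _ _ h_oo.
have tail0 : tail P (X 0) 0 = 1 by rewrite /tail X0_pos.
have hN_oo : h N%:R @[N --> \oo] --> +oo := cvg_comp _ _ cvgr_idn h_oo.
have h_ge1 : \forall N \near \oo, 1 <= h N%:R := (cvgryPge _).1 hN_oo 1.
have N_ge4 : \forall N \near \oo, (4 <= N)%N by exists 4%N.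
have mA : \forall N \near \oo, measurable (event_A X h N).
  by near=> N; apply: measurable_event_A; near: N; exists 2%N.
apply: cvg_EFin; first by near=> N; apply: fin_num_measure; near: N.
apply: (squeeze_cvgr _ (cvg_one_sub_invs _ 7 6 hN_oo) (cvg_cst (1 : R))).
near=> N; apply/andP; split.
  apply: prob_event_A_ge => //; near: N; [exact: N_ge4 | exact: h_ge1].
rewrite /= -lee_fin fineK ?fin_num_measure ?probability_le1 //; near: N; exact: mA.
Unshelve. all: by end_near.
Qed.
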